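(* For every $\epsilon>0$ there exist infinitely many graphs $G$ such that $G$ is $\Gamma$-connected for some Abelian group $\Gamma$ of prime order but $G$ is not $\Gamma'$-connected for some Abelian group $\Gamma'$ with $|\Gamma'| \geq (2-\epsilon)|\Gamma|$. Consequently, for every $\epsilon>0$ there are infinitely many primes $k$ with $g(k) > (2-\epsilon)k$.
   Context: Graphs are finite, may have multiple edges but no loops. For an orientation $D$ of $G$ and a vertex $v$, $E^+(v)$ (resp. $E^-(v)$) is the set of edges directed out of (resp. into) $v$. For an Abelian group $\Gamma$, a graph $G$ is $\Gamma$-connected if for some (equivalently, any) orientation $D$ of $G$ and every $\beta: V(G)\to\Gamma$ with $\sum_{v}\beta(v)=0$ there is $f: E(G)\to\Gamma$ with $f(e)\neq 0$ for all $e$ and $\sum_{e\in E^+(v)} f(e)-\sum_{e\in E^-(v)} f(e)=\beta(v)$ for all $v$. For a natural number $k$, $g(k)$ is the least number such that whenever a graph $G$ is $\Gamma$-connected for some Abelian group $\Gamma$ of order $k$, $G$ is also $\Gamma'$-connected for every Abelian group $\Gamma'$ of order $|\Gamma'|\geq g(k)$. *)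

From HB Require Import structures.
From mathcomp Require Import all_boot all_order all_algebra.
From mathcomp Require Import reals.
Set Implicit Arguments. Unset Strict Implicit. Unset Printing Implicit Defensive.
Import Order.TTheory GRing.Theory Num.Theory.
Local Open Scope ring_scope.

(* A finite graph, possibly with multiple edges, without loops, given together
   with a fixed orientation: edge e is directed from [gtail e] to [ghead e]. *)
Record graph := Graph {
  gV : finType;
  gE : finType;
  gtail : gE -> gV;
  ghead : gE -> gV;
  gloopless : forall e, gtail e != ghead e }.

(* G is Gamma-connected (w.r.t. the orientation carried by G; the notion is
   independent of the orientation). *)
Definition group_connected (G : graph) (Gamma : finZmodType) : Prop :=
  forall beta : gV G -> Gamma, \sum_(v : gV G) beta v = 0 ->
  exists f : gE G -> Gamma, (forall e, f e != 0) /\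
    forall v : gV G,
      \sum_(e : gE G | gtail e == v) f e - \sum_(e : gE G | ghead e == v) f e
      = beta v.

(* [g_bound_ok k m]: every graph that is Gamma-connected for some abelian
   group Gamma of order k is Gamma'-connected for every abelian group Gamma'
   of order >= m.  g(k) is the least m with [g_bound_ok k m]. *)
Definition g_bound_ok (k m : nat) : Prop :=
  forall G : graph,
    (exists Gamma : finZmodType, #|Gamma| = k /\ group_connected G Gamma) ->
    forall Gamma' : finZmodType, (m <= #|Gamma'|)%N -> group_connected G Gamma'.

Definition g_greater_than {R : realType} (k : nat) (x : R) : Prop :=
  forall m : nat, (m%:R <= x) -> ~ g_bound_ok k m.

(* The witnesses are theta graphs: t internally disjoint paths of length n+1
   joining two poles.  Over 'F_p with t >= p and n+1 <= p-2, a flow with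
   boundary beta is determined on path i by its value x_i on the first edge,
   the other values being x_i plus partial sums of beta; so x_i has to avoid
   at most p-2 values, and the x_i have to add up to beta at the source.  A
   Cauchy-Davenport type bound shows that such sums of t >= p choices, each
   from a set of size at least 2, cover 'F_p.
   Over Z_2 x Z_(n+1), put (0,1) at every inner vertex and (t+1,0) at the
   source: along each path the second coordinate runs through all of
   Z_(n+1), so the first one must be 1 on every path, and the source then
   receives t, which is not t+1 modulo 2.
   For t = p and n = p-3 the second group has order 2(p-2) >= (2-eps)p once
   p >= 4/eps. *)

From HB Require Import structures.
From mathcomp Require Import all_boot all_order all_algebra.
From mathcomp Require Import reals.
From mathcomp Require Import zify lra.

Set Implicit Arguments.
Unset Strict Implicit.
Unset Printing Implicit Defensive.
Import Order.TTheory GRing.Theory Num.Theory.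
Local Open Scope ring_scope.

Section PrimeFieldSumsets.
Variables (p : nat) (p_pr : prime p).
Local Notation F := 'F_p.

Lemma Fp_translate_closed (C : {set F}) (d : F) : C != set0 -> d != 0 ->
  (forall x, x \in C -> x + d \in C) -> C = setT.
Proof.
case/set0Pn=> x0 Cx0 d_neq0 Cd; apply/setP=> y; rewrite inE.
have Cx0d k : x0 + d *+ k \in C.
  by elim: k => [|k IHk]; rewrite ?mulr0n ?addr0 // mulrSr addrA Cd.
suff -> : y = x0 + d *+ ((y - x0) / d) by rewrite Cx0d.
by rewrite -mulr_natr natr_Zp mulrC divfK // addrC subrK.
Qed.

Definition addset (A B : {set F}) : {set F} := [set x + y | x in A, y in B].

Lemma card_addset_ge (A B : {set F}) : A != set0 -> (1 < #|B|)%N ->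
  (minn p #|A|.+1 <= #|addset A B|)%N.
Proof.
move=> A_neq0 /card_gt1P [a [b [Ba Bb a_neq_b]]].
set S := addset A B.
pose Aa := [set x + a | x in A].
have card_Aa : #|Aa| = #|A| by apply/card_imset/addIr.
have Aa_sub : Aa \subset S.
  by apply/subsetP=> _ /imsetP [x Ax ->]; apply/imset2P; exists x a.
have [Ab_sub | /subsetPn [_ /imsetP [x Ax ->] Axb_notin]] :=
  boolP ([set x + b | x in A] \subset Aa).
  have Aa_full : Aa = setT.
    apply: (@Fp_translate_closed Aa (b - a)).
    - by rewrite -card_gt0 card_Aa card_gt0.
    - by rewrite subr_eq0 eq_sym.
    - move=> _ /imsetP [x Ax ->]; rewrite -addrA (addrC a) subrK.
      by apply: (subsetP Ab_sub); apply/imsetP; exists x.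
  have -> : S = setT by apply/eqP; rewrite eqEsubset subsetT -Aa_full.
  by rewrite cardsT card_Fp // geq_minl.
apply: leq_trans (geq_minr _ _) _.
have <- : #|(x + b) |: Aa| = #|A|.+1 by rewrite cardsU1 Axb_notin card_Aa.
apply: subset_leq_card; rewrite subUset Aa_sub andbT sub1set.
by apply/imset2P; exists x b.
Qed.

Definition sumset t (B : 'I_t -> {set F}) : {set F} :=
  [set \sum_i x i | x : {ffun 'I_t -> F} in family B].

Lemma sumset_recl t (B : 'I_t.+1 -> {set F}) :
  addset (sumset (fun i => B (lift ord0 i))) (B ord0) \subset sumset B.
Proof.
apply/subsetP=> _ /imset2P [_ y /imsetP [x /familyP Bx ->] By ->].
apply/imsetP; exists [ffun i => if unlift ord0 i is Some j then x j else y].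
  apply/familyP=> i; rewrite ffunE.
  by case: unliftP => [j -> | ->]; [apply: Bx | apply: By].
by rewrite big_ord_recl ffunE unlift_none addrC; congr (_ + _);
  apply: eq_bigr => j _; rewrite ffunE liftK.
Qed.

Lemma card_sumset_ge t (B : 'I_t -> {set F}) : (forall i, 1 < #|B i|)%N ->
  (minn p t.+1 <= #|sumset B|)%N.
Proof.
elim: t B => [|t IHt] B B_gt1.
  apply: leq_trans (geq_minr _ _) _; rewrite card_gt0; apply/set0Pn.
  exists 0; apply/imsetP; exists [ffun=> 0]; first by apply/familyP=> -[].
  by rewrite big_ord0.
pose B' : 'I_t -> {set F} := fun i => B (lift ord0 i).
have card_B' : (minn p t.+1 <= #|sumset B'|)%N := IHt B' (fun i => B_gt1 _).
have B'_neq0 : sumset B' != set0.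
  by rewrite -card_gt0; apply: leq_trans card_B'; rewrite leq_min prime_gt0.
have : (minn p #|sumset B'|.+1 <= #|sumset B|)%N :=
  leq_trans (card_addset_ge B'_neq0 (B_gt1 ord0)) (subset_leq_card (sumset_recl B)).
by move: card_B'; lia.
Qed.

Lemma sumset_full t (B : 'I_t -> {set F}) : (p <= t)%N -> (forall i, 1 < #|B i|)%N ->
  sumset B = setT.
Proof.
move=> p_le_t B_gt1; apply/eqP; rewrite eqEcard subsetT cardsT card_Fp //.
by have := card_sumset_ge B_gt1; rewrite (minn_idPl _) // ltnW.
Qed.

End PrimeFieldSumsets.

Definition boundary (G : graph) (M : zmodType) (f : gE G -> M) (v : gV G) : M :=
  \sum_(e | gtail e == v) f e - \sum_(e | ghead e == v) f e.

Lemma sum_boundary (G : graph) (M : zmodType) (f : gE G -> M) :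
  \sum_v boundary f v = 0.
Proof.
have sum_by (g : gE G -> gV G) : \sum_v \sum_(e | g e == v) f e = \sum_e f e.
  by rewrite (partition_big g xpredT).
by rewrite sumrB !sum_by subrr.
Qed.

Lemma boundary_eq_but_one (G : graph) (M : zmodType) (f : gE G -> M)
    (beta : gV G -> M) v0 :
    \sum_v beta v = 0 -> (forall v, v != v0 -> boundary f v = beta v) ->
  forall v, boundary f v = beta v.
Proof.
move=> beta_sum f_beta v; have [-> {v} | /f_beta //] := eqVneq v v0.
have := sum_boundary f; rewrite -[RHS]beta_sum (bigD1 v0) // [RHS](bigD1 v0) //=.
by rewrite (eq_bigr beta) => [/addIr | v /f_beta].
Qed.

Section ThetaGraph.
Variables t n : nat.

(* [inl false] and [inl true] are the two poles; [inr (i, k)] is the k-th inner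
   vertex of the i-th path, and edge [(i, j)] joins the vertices j-1 and j of
   that path, counting the source as vertex -1 and the sink as vertex n. *)
Definition theta_vertex := (bool + 'I_t * 'I_n)%type.
Definition theta_edge := ('I_t * 'I_n.+1)%type.

Definition theta_tail (e : theta_edge) : theta_vertex :=
  if unlift ord0 e.2 is Some k then inr (e.1, k) else inl false.
Definition theta_head (e : theta_edge) : theta_vertex :=
  if unlift ord_max e.2 is Some k then inr (e.1, k) else inl true.

Lemma theta_loopless e : theta_tail e != theta_head e.
Proof.
case: e => i j; rewrite /theta_tail /theta_head /=.
case: unliftP => [k ->|->]; case: unliftP => [k' |] //= j_eq.
apply/negP=> /eqP [k_eq]; move: j_eq; rewrite -k_eq => /(congr1 val) /=.
have lt_k_n : (k < n)%N := ltn_ord k.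
by rewrite /bump leq0n leqNgt lt_k_n; lia.
Qed.

Definition theta_graph := Graph theta_loopless.

Variables (M : zmodType) (f : theta_edge -> M).

Lemma sum_theta_column j0 : \sum_(e : theta_edge | e.2 == j0) f e = \sum_i f (i, j0).
Proof.
transitivity (\sum_i \sum_(j | j == j0) f (i, j)).
  by rewrite pair_big_dep; apply: eq_big => -[i j].
by apply: eq_bigr => i _; rewrite big_pred1_eq.
Qed.

Lemma theta_boundary_source :
  boundary (G := theta_graph) f (inl false) = \sum_i f (i, ord0).
Proof.
have tail_eq e : (theta_tail e == inl false) = (e.2 == ord0).
  by rewrite /theta_tail; case: unliftP => [k ->|->].
have head_neq e : (theta_head e == inl false) = false.
  by rewrite /theta_head; case: unliftP.
rewrite /boundary (eq_bigl _ _ head_neq) big_pred0_eq subr0.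
by rewrite (eq_bigl _ _ tail_eq) sum_theta_column.
Qed.

Lemma theta_boundary_inner i k :
  boundary (G := theta_graph) f (inr (i, k)) = f (i, lift ord0 k) - f (i, lift ord_max k).
Proof.
have tail_eq e : (theta_tail e == inr (i, k)) = (e == (i, lift ord0 k)).
  case: e => i' j; rewrite /theta_tail /=; case: unliftP => [k' ->|->] /=.
    by rewrite !xpair_eqE (inj_eq lift_inj).
  by rewrite xpair_eqE (negbTE (neq_lift _ _)) andbF.
have head_eq e : (theta_head e == inr (i, k)) = (e == (i, lift ord_max k)).
  case: e => i' j; rewrite /theta_head /=; case: unliftP => [k' ->|->] /=.
    by rewrite !xpair_eqE (inj_eq lift_inj).
  by rewrite xpair_eqE (negbTE (neq_lift _ _)) andbF.
by rewrite /boundary (eq_bigl _ _ tail_eq) (eq_bigl _ _ head_eq) !big_pred1_eq.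
Qed.

Lemma theta_path_increments (d : M) i :
    (forall k, boundary (G := theta_graph) f (inr (i, k)) = d) ->
  forall j : 'I_n.+1, f (i, j) = f (i, ord0) + d *+ j.
Proof.
move=> f_incr [j]; elim: j => [|j IHj] lt_j_n1.
  by rewrite mulr0n addr0; congr (f (i, _)); apply: val_inj.
have lt_j_n : (j < n)%N by [].
have := f_incr (Ordinal lt_j_n); rewrite theta_boundary_inner.
have -> : lift ord0 (Ordinal lt_j_n) = Ordinal lt_j_n1 by apply: val_inj.
have -> : lift ord_max (Ordinal lt_j_n) = Ordinal (ltnW lt_j_n1).
  by apply: val_inj; rewrite /= /bump leqNgt lt_j_n.
by move/eqP; rewrite subr_eq => /eqP ->; rewrite IHj mulrS addrCA.
Qed.

End ThetaGraph.

Lemma theta_graph_Fp_connected p t n : prime p -> (p <= t)%N -> (n.+1 <= p - 2)%N ->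
  group_connected (theta_graph t n) 'F_p.
Proof.
move=> p_pr p_le_t n_lt beta beta_sum.
pose P i (j : nat) := \sum_(k < n | (k < j)%N) beta (inr (i, k)).
pose B i := ~: [set - P i j | j : 'I_n.+1].
have B_gt1 i : (1 < #|B i|)%N.
  have card_forbidden : (#|[set - P i j | j : 'I_n.+1]| <= n.+1)%N.
    by apply: leq_trans (leq_imset_card _ _) _; rewrite card_ord.
  by rewrite /B cardsCs setCK card_Fp //; have := prime_gt1 p_pr; lia.
have : beta (inl false) \in sumset B by rewrite sumset_full ?inE.
case/imsetP=> x /familyP Bx x_sum.
exists (fun e : theta_edge t n => x e.1 + P e.1 e.2); split.
  move=> [i j] /=; rewrite addr_eq0; apply: contraTneq (Bx i) => ->.
  by rewrite inE negbK; apply/imsetP; exists j.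
move=> v; apply: (boundary_eq_but_one (beta := beta) (v0 := inl true)) => //.
move=> -[[] // | [i k]] _.
  rewrite theta_boundary_source x_sum; apply: eq_bigr => i _.
  by rewrite /P big_pred0 ?addr0.
rewrite theta_boundary_inner /= /bump leq0n (leqNgt n k) ltn_ord add1n add0n.
suff -> : P i k.+1 = beta (inr (i, k)) + P i k by rewrite addrCA addrK.
rewrite /P (bigD1 k) //=; congr (_ + _); apply: eq_bigl => k'.
by rewrite ltnS ltn_neqAle andbC.
Qed.

Definition Z2xZ m := ('Z_2 * 'Z_m)%type.
HB.instance Definition _ m := GRing.Zmodule.on (Z2xZ m).
HB.instance Definition _ m := Finite.on (Z2xZ m).

Lemma card_Z2xZ m : #|(Z2xZ m.+2 : finType)| = (2 * m.+2)%N.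
Proof. by rewrite card_prod !card_ord. Qed.

Lemma theta_graph_not_Z2xZ_connected t m :
  ~ group_connected (theta_graph t m.+1) (Z2xZ m.+2).
Proof.
pose beta (v : theta_vertex t m.+1) : Z2xZ m.+2 := match v with
  | inl false => (t.+1%:R, 0)
  | inl true => - ((t.+1%:R, 0) + \sum_(w : 'I_t * 'I_m.+1) (0, 1))
  | inr _ => (0, 1) end.
move=> /(_ beta) [|f [f_neq0 f_beta]].
  by rewrite big_sumType big_bool /= -addrA addNr.
have f_path i (j : 'I_m.+2) : f (i, j) = f (i, ord0) + (0, j%:R).
  have -> : (0, j%:R) = (0, 1) *+ j :> Z2xZ m.+2 by rewrite pairMnE mul0rn.
  by apply: theta_path_increments => k; apply: f_beta.
have f_first i : (f (i, ord0)).1 = 1.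
  pose j : 'I_m.+2 := - (f (i, ord0)).2.
  have f_ij2 : (f (i, j)).2 = 0 by rewrite f_path natr_Zp raddfD; apply: addrN.
  have : (f (i, j)).1 != 0.
    apply: contra (f_neq0 (i, j)) => /eqP f_ij1.
    by rewrite [f _]surjective_pairing f_ij1 f_ij2.
  rewrite f_path raddfD /= addr0.
  by case: (f (i, ord0)).1 => -[|[|]] // ? _; apply: val_inj.
have : boundary (G := theta_graph t m.+1) f (inl false) = beta (inl false) := f_beta _.
rewrite theta_boundary_source => /(congr1 fst); rewrite raddf_sum /=.
under eq_bigr do rewrite f_first.
rewrite sumr_const card_ord -natr1 => /eqP.
by rewrite -[X in X == _]addr0 (inj_eq (addrI _)) eq_sym oner_eq0.
Qed.

Lemma exists_prime_gt (R : archiRealDomainType) (x : R) N :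
  exists p, [/\ (N < p)%N, prime p & x < p%:R].
Proof.
have [p lt_Np p_pr] := prime_above (maxn N (Num.Def.archi_bound `|x|)).
exists p; split=> //; first lia.
apply: le_lt_trans (real_ler_norm (num_real x)) _.
apply: lt_le_trans (archi_boundP (normr_ge0 x)) _.
by rewrite ler_nat ltnW // (leq_ltn_trans (leq_maxr _ _) lt_Np).
Qed.

Lemma two_minus_eps_le (R : realFieldType) (eps : R) p : 0 < eps -> (2 <= p)%N ->
  4 / eps <= p%:R -> (2 - eps) * p%:R <= (2 * (p - 2))%:R.
Proof.
move=> eps_gt0 le_2p; rewrite ler_pdivrMr // natrM natrB //; nra.
Qed.

Theorem corollary3p3 (R : realType) (eps : R) : 0 < eps ->
  (forall N : nat, exists G : graph, (N < #|gV G| + #|gE G|)%N /\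
     exists Gamma : finZmodType, prime #|Gamma| /\ group_connected G Gamma /\
     exists Gamma' : finZmodType,
       (2 - eps) * (#|Gamma|)%:R <= (#|Gamma'|)%:R /\ ~ group_connected G Gamma')
  /\
  (forall N : nat, exists k : nat, (N < k)%N /\ prime k /\
     g_greater_than k ((2 - eps) * k%:R)).
Proof.
move=> eps_gt0.
pose G p := theta_graph p (p - 4).+1.
pose Gamma' p := Z2xZ (p - 4).+2.
have large_prime N : exists p, [/\ (N < p)%N, prime p, (4 < p)%N & 4 / eps < p%:R].
  have [p [lt_Np p_pr lt_p]] := exists_prime_gt (4 / eps) (maxn N 4).
  by exists p; split=> //; lia.
have G_conn p : prime p -> (4 < p)%N -> group_connected (G p) 'F_p.
  by move=> p_pr lt_4p; apply: theta_graph_Fp_connected => //; lia.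
have card_Gamma' p : (4 < p)%N -> 4 / eps < p%:R ->
    (2 - eps) * p%:R <= #|(Gamma' p : finType)|%:R.
  move=> lt_4p lt_p; rewrite card_Z2xZ; have -> : (p - 4).+2 = (p - 2)%N by lia.
  by apply: two_minus_eps_le; rewrite ?ltW //; lia.
split=> N; have [p [lt_Np p_pr lt_4p lt_p]] := large_prime N.
  exists (G p); split; first by rewrite /= card_prod !card_ord; nia.
  exists ('F_p : finZmodType); rewrite card_Fp //; do !split=> //; first exact: G_conn.
  exists (Gamma' p : finZmodType); split; first exact: card_Gamma'.
  exact: theta_graph_not_Z2xZ_connected.
exists p; split=> //; split=> // m le_m g_ok.
apply: (@theta_graph_not_Z2xZ_connected p (p - 4)).
apply: (g_ok _ _ (Gamma' p : finZmodType)).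
  by exists ('F_p : finZmodType); rewrite card_Fp //; split=> //; exact: G_conn.
by rewrite -(ler_nat R); apply: le_trans le_m (card_Gamma' p lt_4p lt_p).
Qed.
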